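(* Consider a single positioning infrastructure with $N_{\text{anc}}$ anchors providing ranging information, of which $N_{\text{adv}}$ are manipulated by an uncoordinated attacker, and let $N_{\text{min}}$ be the minimum number of anchors required for positioning. Suppose that $N_{\text{anc}}-N_{\text{adv}}>N_{\text{min}}$. Then the true position $\mathbf{p}_{\text{usr}}(t)$ can be recovered (the spoofed subset position estimates can be excluded, leaving benign estimates equal to $\mathbf{p}_{\text{usr}}(t)$).
   Context: Idealized model of subset-based integrity monitoring: a platform at unknown true position $\mathbf{p}_{\text{usr}}(t)\in\mathbb{R}^3$ receives ranging measurements from anchors with known positions (e.g., GNSS satellites, for which $N_{\text{min}}=4$). For every subset of anchors of size at least $N_{\text{min}}$, a position estimate is computed by multilateration. Positioning noise and uncertainties are taken to be negligible (zero) while attacker-induced deviations are preserved, and the anchor geometry is good, so every subset consisting only of benign (non-manipulated) measurements of size at least $N_{\text{min}}$ yields exactly $\mathbf{p}_{\text{usr}}(t)$. ''Uncoordinated spoofing'' means the manipulated ranging values are chosen independently (potentially randomly), so subset estimates involving manipulated measurements are random positions, almost surely inconsistent with the benign position and with each other. $C(n,k)$ denotes the binomial coefficient. *)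

From mathcomp Require Import all_boot all_order all_algebra.
Set Implicit Arguments. Unset Strict Implicit. Unset Printing Implicit Defensive.

Definition admissible (Nanc Nmin : nat) (S : {set 'I_Nanc}) : bool :=
  Nmin <= #|S|.

Definition benign (Nanc : nat) (A S : {set 'I_Nanc}) : bool :=
  S :&: A == set0.

(* Observable consistency test (does not use the unknown attacked set):
   x is produced as the estimate of at least two distinct admissible subsets. *)
Definition consistent_estimate (R : Type) (Nanc Nmin : nat)
  (est : {set 'I_Nanc} -> R) (x : R) : Prop :=
  exists S S' : {set 'I_Nanc},
    [/\ S != S', admissible Nmin S, admissible Nmin S', est S = x & est S' = x].

From mathcomp Require Import all_boot all_order all_algebra.

(* An estimate shared by two distinct admissible subsets cannot come from two
   spoofed subsets, since those are mutually inconsistent; so one of the two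
   subsets is benign and the shared value is the true position. Conversely,
   more than [Nmin] benign anchors leave room for two distinct benign admissible
   subsets (all benign anchors, and all but one of them), both yielding the
   true position, which is therefore consistent. *)

Set Implicit Arguments.
Unset Strict Implicit.

Local Open Scope ring_scope.

Lemma benignE (n : nat) (A S : {set 'I_n}) : benign A S = (S \subset ~: A).
Proof. by rewrite /benign setI_eq0 disjoints_subset. Qed.

Lemma exists_two_large_subsets (T : finType) (m : nat) (B : {set T}) :
  (m < #|B|)%N ->
  exists S S' : {set T},
    [/\ S != S', S \subset B, S' \subset B, (m <= #|S|)%N & (m <= #|S'|)%N].
Proof.
move=> ltmB; have /set0Pn [i Bi] : B != set0.
  by rewrite -card_gt0 (leq_ltn_trans _ ltmB).
have cardBi : #|B :\ i|.+1 = #|B| by rewrite (cardsD1 i B) Bi.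
exists B, (B :\ i); split; rewrite ?subxx ?subD1set ?(ltnW ltmB) //.
- by apply/eqP => eBBi; move: Bi; rewrite {1}eBBi setD11.
- by rewrite -ltnS cardBi.
Qed.

Section UncoordinatedSpoofing.

Variables (n Nmin : nat) (A : {set 'I_n}).
Variables (X : Type) (p : X) (est : {set 'I_n} -> X).

Hypothesis est_benign :
  forall S, admissible Nmin S -> benign A S -> est S = p.
Hypothesis est_spoofed :
  forall S, admissible Nmin S -> ~~ benign A S -> est S <> p.
Hypothesis est_spoofed_inj :
  forall S S', admissible Nmin S -> admissible Nmin S' ->
  ~~ benign A S -> ~~ benign A S' -> S != S' -> est S <> est S'.

Lemma est_eq_benign S : admissible Nmin S -> (est S = p <-> benign A S).
Proof.
move=> admS; split; last exact: est_benign.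
by move=> estSp; apply/negPn/negP => /(est_spoofed admS).
Qed.

Lemma consistent_estimate_eq x : consistent_estimate Nmin est x -> x = p.
Proof.
move=> [S [S' [neSS' admS admS' <- estS'x]]].
have [bS | nbS] := boolP (benign A S); first exact: est_benign.
have [bS' | nbS'] := boolP (benign A S'); first by rewrite -estS'x est_benign.
by case: (est_spoofed_inj admS admS' nbS nbS' neSS'); rewrite estS'x.
Qed.

Lemma consistent_estimate_p :
  (Nmin < #|~: A|)%N -> consistent_estimate Nmin est p.
Proof.
move=> /exists_two_large_subsets [S [S' [neSS' subS subS' admS admS']]].
by exists S, S'; split; rewrite // est_benign // benignE.
Qed.

End UncoordinatedSpoofing.

Theorem lemma1 (R : realFieldType) (Nanc Nadv Nmin : nat)
  (A : {set 'I_Nanc})                         (* manipulated anchors *)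
  (p_usr : 'rV[R]_3)                          (* true position at time t *)
  (est : {set 'I_Nanc} -> 'rV[R]_3)           (* subset position estimates *)
  (hA : #|A| = Nadv)
  (* zero noise, good geometry: benign admissible subsets give p_usr *)
  (hbenign : forall S, admissible Nmin S -> benign A S -> est S = p_usr)
  (* uncoordinated spoofing: estimates of subsets involving manipulated
     measurements are inconsistent with the benign position ... *)
  (hspoof_true : forall S, admissible Nmin S -> ~~ benign A S -> est S <> p_usr)
  (* ... and with each other *)
  (hspoof_mut : forall S S', admissible Nmin S -> admissible Nmin S' ->
      ~~ benign A S -> ~~ benign A S' -> S != S' -> est S <> est S')
  (hN : (Nmin < Nanc - Nadv)%N) :
  (forall x, consistent_estimate Nmin est x <-> x = p_usr) /\
  (forall S, admissible Nmin S -> (est S = p_usr <-> benign A S)).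
Proof.
have cardCA : #|~: A| = (Nanc - Nadv)%N by rewrite cardsCs setCK card_ord hA.
split=> [x | S admS]; last exact: (est_eq_benign hbenign hspoof_true admS).
split; first exact: (consistent_estimate_eq hbenign hspoof_mut).
by move=> ->; apply: consistent_estimate_p hbenign _; rewrite cardCA.
Qed.
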